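(* Let $T=2k$ with $k\ge 1$ an integer. Then every word $w=s_1\cdots s_T\in\Omega_T$ satisfies $2x_{12}(w)+x_{13}(w)+x_{32}(w)\ge k-1$. Moreover, if $s_T=2$, then $2x_{12}(w)+x_{13}(w)+x_{32}(w)> k-1$.
   Context: $\Omega_T$ is the set of words $s_1\cdots s_T$ over $\{1,2,3\}$ with $s_l\ne s_{l+1}$ for all $l$; for $i\ne j$, $x_{ij}(w)$ is the number of $l\in\{1,\dots,T-1\}$ with $s_ls_{l+1}=ij$. *)

From mathcomp Require Import all_boot.
Set Implicit Arguments. Unset Strict Implicit. Unset Printing Implicit Defensive.

(* Words over the alphabet {1,2,3} are represented as sequences of naturals;
   letter s_l (1-based in the paper) is  nth 0 w (l-1). *)

Definition in_Omega (T : nat) (w : seq nat) : bool :=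
  [&& size w == T,
      all (fun a => (1 <= a <= 3)) w &
      [forall l : 'I_T.-1, nth 0 w l != nth 0 w l.+1]].

Definition xcount (i j : nat) (w : seq nat) : nat :=
  #|[set l : 'I_(size w).-1 | (nth 0 w l == i) && (nth 0 w l.+1 == j)]|.

From mathcomp Require Import all_boot.
From mathcomp Require Import zify.

Set Implicit Arguments.
Unset Strict Implicit.
Unset Printing Implicit Defensive.

(* A potential argument: with phi(1) = 2, phi(3) = 1, phi(2) = 0, every step
   a -> b (a <> b) of a word satisfies
     1 <= 2 (2 [ab = 12] + [ab = 13] + [ab = 32]) + phi(b) - phi(a).
   Telescoping over the T - 1 = 2k - 1 steps gives
     2k - 1 <= 2 (2 x12 + x13 + x32) + phi(s_T) - phi(s_1),
   and phi(s_1) - phi(s_T) <= 2, with phi(s_T) = 0 when s_T = 2. *)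

Definition xsum (w : seq nat) : nat := 2 * xcount 1 2 w + xcount 1 3 w + xcount 3 2 w.

Definition step_weight (a b : nat) : nat :=
  2 * ((a == 1) && (b == 2)) + ((a == 1) && (b == 3)) + ((a == 3) && (b == 2)).

Definition potential (a : nat) : nat := if a == 1 then 2 else if a == 3 then 1 else 0.

Lemma xcountE i j w :
  xcount i j w = \sum_(l < (size w).-1) ((nth 0 w l == i) && (nth 0 w l.+1 == j) : nat).
Proof.
rewrite /xcount -sum1_card big_mkcond /=.
by apply: eq_bigr => l _; rewrite inE; case: (_ && _).
Qed.

Lemma xcount1 i j a : xcount i j [:: a] = 0.
Proof. by rewrite xcountE big_ord0. Qed.

Lemma xcount_cons2 i j a b s :
  xcount i j [:: a, b & s] = ((a == i) && (b == j) : nat) + xcount i j (b :: s).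
Proof. by rewrite !xcountE /= big_ord_recl. Qed.

Lemma xsum1 a : xsum [:: a] = 0.
Proof. by rewrite /xsum !xcount1. Qed.

Lemma xsum_cons2 a b s : xsum [:: a, b & s] = step_weight a b + xsum (b :: s).
Proof. by rewrite /xsum /step_weight !xcount_cons2; lia. Qed.

Lemma potential_le2 a : potential a <= 2.
Proof. by rewrite /potential; case: ifP => // _; case: ifP. Qed.

Lemma potential_step a b : 1 <= a <= 3 -> 1 <= b <= 3 -> a != b ->
  potential a + 1 <= 2 * step_weight a b + potential b.
Proof. by case: a => [|[|[|[|a]]]] //; case: b => [|[|[|[|b]]]]. Qed.

Lemma potential_telescope a s :
  all (fun x => 1 <= x <= 3) (a :: s) -> path (fun x y => x != y) a s ->
  size s + potential a <= 2 * xsum (a :: s) + potential (last a s).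
Proof.
elim: s a => [|b s IH] a /=; first by rewrite xsum1; lia.
move=> /and3P [a13 b13 s13] /andP [ab bs].
have := potential_step a13 b13 ab.
have := IH b; rewrite /= b13 => /(_ s13 bs).
by rewrite xsum_cons2; lia.
Qed.

Lemma in_Omega_path T w : in_Omega T w -> path (fun x y => x != y) (head 0 w) (behead w).
Proof.
case/and3P=> /eqP <- _ /forallP neq; case: w neq => [|a s] neq //=.
by apply/(pathP 0) => l ls; exact: (neq (Ordinal ls)).
Qed.

Theorem lemma3 (k : nat) (w : seq nat) :
  1 <= k -> in_Omega (2 * k) w ->
  k.-1 <= 2 * xcount 1 2 w + xcount 1 3 w + xcount 3 2 w /\
  (last 0 w = 2 -> k.-1 < 2 * xcount 1 2 w + xcount 1 3 w + xcount 3 2 w).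
Proof.
move=> k_gt0 Ow; have Pw := in_Omega_path Ow.
case/and3P: Ow; case: w Pw => [|a s] /= Pw /eqP sz_w letters _; first by lia.
have telescope := potential_telescope letters Pw.
have := potential_le2 a; have := potential_le2 (last a s).
rewrite -/(xsum (a :: s)); split; first by lia.
by move=> last2; rewrite last2 /potential /= in telescope; lia.
Qed.
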